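(* Let $n\in\mathbb N_0$ and $j\in\{-n,\dots,n\}$. If $n+j$ is odd, then $\widetilde P_n^j(0)=0$. Otherwise, \[ \frac{2n+1}{2\pi^2\sqrt{(n+1)^2-j^2}} \le \left|\widetilde P_n^j(0)\right|^2 \le \frac{2n+1}{4\pi\sqrt{(n+1)^2-j^2}}. \] Furthermore, for every $j\in\mathbb N_0$, $\lim_{n\to\infty,\ n+j\text{ even}} \left|\widetilde P_n^j(0)\right| = \frac1\pi$.
   Context: Associated Legendre functions: $P_n^k(t)=\frac{(-1)^k}{2^n n!}(1-t^2)^{k/2}\frac{d^{n+k}}{dt^{n+k}}(t^2-1)^n$ for $n\in\mathbb N_0$, $k=0,\dots,n$, $t\in[-1,1]$. Normalized versions: $\widetilde P_n^k=\sqrt{\frac{2n+1}{4\pi}\frac{(n-k)!}{(n+k)!}}\,P_n^k$ for $k=0,\dots,n$, and $\widetilde P_n^{-k}=(-1)^k\widetilde P_n^k$. *)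

From HB Require Import structures.
From mathcomp Require Import all_boot all_order all_algebra.
From mathcomp Require Import all_classical all_reals all_analysis.
Set Implicit Arguments. Unset Strict Implicit. Unset Printing Implicit Defensive.
Import Order.TTheory GRing.Theory Num.Theory.
Local Open Scope ring_scope.

Definition legendreP (R : realType) (n k : nat) (t : R) : R :=
  (-1) ^+ k / (2 ^+ n * (n`!)%:R) * (Num.sqrt (1 - t ^+ 2)) ^+ k
  * ((('X ^+ 2 - 1) ^+ n : {poly R}) ^`(n + k)).[t].

Definition legendrePn (R : realType) (n k : nat) (t : R) : R :=
  Num.sqrt ((2 * n%:R + 1) / (4 * pi) * ((n - k)`!)%:R / ((n + k)`!)%:R)
  * legendreP n k t.

Definition legendrePt (R : realType) (n : nat) (j : int) (t : R) : R :=
  if (0 <= j)%R then legendrePn n `|j|%N t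
  else (-1) ^+ `|j|%N * legendrePn n `|j|%N t.

From HB Require Import structures.
From mathcomp Require Import all_boot all_order all_algebra.
From mathcomp Require Import all_classical all_reals all_analysis.
From mathcomp Require Import ring lra zify.
Set Implicit Arguments. Unset Strict Implicit. Unset Printing Implicit Defensive.
Import Order.TTheory GRing.Theory Num.Theory.
Local Open Scope ring_scope.

(* At t = 0 only the coefficient of t^(n+k) in (t^2 - 1)^n survives the
   differentiation, so P~_n^k(0) = 0 when n + k is odd.  When n = M + L and
   k = M - L the factorials rearrange into
     P~_n^k(0)^2 = (2n+1)/(4 pi) * c_M * c_L,   c_m = (2m)! / (4^m m!^2).
   The Wallis integrals W_k = int_0^(pi/2) sin^k decrease in k, and
   W_(2m) = c_m pi/2, W_(2m+1) = 1 / ((2m+1) c_m); hence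
   2/(2m+1) <= pi c_m^2 <= 1/m, while an induction gives c_m^2 <= 1/(2m+1).
   As (n+1)^2 - k^2 = (2M+1)(2L+1), this yields the two-sided bound; for fixed
   k, the same estimates squeeze (pi P~_n^k(0))^4 to 1. *)

Section WallisIntegrals.
Variable R : realType.

(* The primitive of [sin ^+ k] vanishing at [0], given by the reduction formula;
   its value at [pi / 2] is the k-th Wallis integral. *)
Fixpoint sin_pow_prim (k : nat) (x : R) : R :=
  match k with
  | 0 => x
  | 1 => 1 - cos x
  | (k'.+1 as k1).+1 =>
      - (sin x ^+ k1 * cos x) / k1.+1%:R + k1%:R / k1.+1%:R * sin_pow_prim k' x
  end.

Lemma is_derive_sin_pow_prim k (x : R) :
  is_derive x (1 : R) (sin_pow_prim k) (sin x ^+ k).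
Proof.
elim/ltn_ind: k x => -[|[|k]] IH x.
- by rewrite expr0; apply: is_derive_id.
- by apply: trigger_derive; rewrite /=; lra.
- have IHk := IH k (ltnW (ltnSn k.+1)) x.
  have -> : sin_pow_prim k.+2 = (- (k.+2%:R)^-1) *: ((@sin R) ^+ k.+1 * cos)
                               + (k.+1%:R / k.+2%:R) *: sin_pow_prim k.
    by apply/funext => y; rewrite !fctE /GRing.scale /=; ring.
  apply: is_derive_eq; rewrite !fctE /GRing.scale /=.
  have -> : cos x * (k.+1%:R * sin x ^+ k * cos x) =
            k.+1%:R * sin x ^+ k * cos x ^+ 2 by ring.
  rewrite cos2sin2 !exprS; field; have := ler0n R k; lra.
Qed.

Lemma sin_pow_prim0 k : sin_pow_prim k 0 = 0.
Proof.
elim/ltn_ind: k => -[|[|k]] IH //=; first by rewrite cos0 subrr.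
by rewrite sin0 IH // expr0n /= mul0r oppr0 mul0r add0r mulr0.
Qed.

Lemma sin_pow_prim_pihalfSS k :
  sin_pow_prim k.+2 (pi / 2) = k.+1%:R / k.+2%:R * sin_pow_prim k (pi / 2).
Proof. by rewrite /= cos_pihalf mulr0 oppr0 mul0r add0r. Qed.

(* The difference has derivative [sin ^+ k * (1 - sin)], nonnegative on
   [0, pi/2]. *)
Lemma sin_pow_prim_pihalfS_le k :
  sin_pow_prim k.+1 (pi / 2) <= sin_pow_prim k (pi / 2).
Proof.
pose G := sin_pow_prim k - sin_pow_prim k.+1.
have DG x : is_derive x (1 : R) G (sin x ^+ k - sin x ^+ k.+1).
  exact: is_deriveB (is_derive_sin_pow_prim k x) (is_derive_sin_pow_prim k.+1 x).
have : G 0 <= G (pi / 2).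
  apply: (@ger0_derive1_ndecr _ _ 0 (pi / 2)).
  - by move=> x _; have [] := DG x.
  - move=> x; rewrite in_itv /= => /andP[x0 x1].
    rewrite derive1E (@derive_val _ _ _ _ _ _ _ (DG x)).
    have s0 : 0 <= sin x by apply: sin_ge0_pi; apply/andP; split; lra.
    rewrite exprS -{1}(mul1r (sin x ^+ k)) -mulrBl.
    by rewrite mulr_ge0 ?subr_ge0 ?exprn_ge0 ?sin_le1.
  - by apply: derivable_within_continuous => x _; have [] := DG x.
  - by [].
  - by have := pi_gt0 R; lra.
  - by [].
by rewrite /G !fctE !sin_pow_prim0 subrr subr_ge0.
Qed.

Definition wallis_ratio (m : nat) : R :=
  (m.*2)`!%:R / (2 ^+ m.*2 * (m`!)%:R ^+ 2).

Lemma wallis_ratio0 : wallis_ratio 0 = 1.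
Proof. by rewrite /wallis_ratio expr0 mul1r expr1n divr1. Qed.

Lemma wallis_ratioS m :
  wallis_ratio m.+1 = wallis_ratio m * m.*2.+1%:R / m.*2.+2%:R.
Proof.
rewrite /wallis_ratio doubleS !factS !natrM !exprS.
have -> : m.*2.+2%:R = 2 * m.+1%:R :> R by rewrite -natrM mul2n.
have := fact_gt0 m; have := ltn0Sn m; have := ltn0Sn m.*2.
rewrite -!(ltr0n R) => h1 h2 h3.
have := exprn_gt0 m.*2 (ltr0Sn R 1) => h4.
field; lra.
Qed.

Lemma wallis_ratio_gt0 m : 0 < wallis_ratio m.
Proof. by rewrite divr_gt0 ?mulr_gt0 ?exprn_gt0 ?ltr0n ?fact_gt0. Qed.

Lemma sin_pow_prim_pihalf_double m :
  sin_pow_prim m.*2 (pi / 2) = wallis_ratio m * (pi / 2).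
Proof.
elim: m => [|m IH]; first by rewrite wallis_ratio0 mul1r.
by rewrite doubleS sin_pow_prim_pihalfSS IH wallis_ratioS; ring.
Qed.

Lemma sin_pow_prim_pihalf_doubleS m :
  sin_pow_prim m.*2.+1 (pi / 2) = (m.*2.+1%:R * wallis_ratio m)^-1.
Proof.
elim: m => [|m IH].
  by rewrite wallis_ratio0 /= cos_pihalf subr0 mulr1 invr1.
rewrite doubleS sin_pow_prim_pihalfSS IH wallis_ratioS.
have := wallis_ratio_gt0 m; have := ltn0Sn m.*2; have := ltn0Sn m.*2.+1.
have := ltn0Sn m.*2.+2; rewrite -!(ltr0n R) => *.
field; lra.
Qed.

Lemma wallis_ratio_sqr_ge m : 2 <= pi * wallis_ratio m ^+ 2 * (2 * m%:R + 1).
Proof.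
have := sin_pow_prim_pihalfS_le m.*2.
rewrite sin_pow_prim_pihalf_doubleS sin_pow_prim_pihalf_double.
have -> : m.*2.+1%:R = 2 * m%:R + 1 :> R by rewrite -natrM mul2n -addn1 natrD.
have := wallis_ratio_gt0 m; have := pi_gt0 R; have : (0 : R) <= m%:R by [].
set c := wallis_ratio m => m0 p0 c0.
by rewrite -[X in X <= _]div1r ler_pdivrMr ?mulr_gt0 //; nra.
Qed.

Lemma wallis_ratio_sqr_le m : pi * wallis_ratio m ^+ 2 * m%:R <= 1.
Proof.
case: m => [|m]; first by rewrite mulr0 ler01.
have := sin_pow_prim_pihalfS_le m.*2.+1.
rewrite -doubleS sin_pow_prim_pihalf_double sin_pow_prim_pihalf_doubleS.
have -> : m.*2.+1%:R * wallis_ratio m = 2 * m.+1%:R * wallis_ratio m.+1.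
  rewrite wallis_ratioS -natrM mul2n doubleS.
  by have := ltn0Sn m.*2.+1; rewrite -(ltr0n R) => ?; field; rewrite gt_eqF.
have := wallis_ratio_gt0 m.+1; have := ltn0Sn m; rewrite -(ltr0n R).
set c := wallis_ratio m.+1 => v0 c0 H.
by rewrite -[X in _ <= X]div1r ler_pdivlMr ?mulr_gt0 // in H; lra.
Qed.

Lemma wallis_ratio_sqr_le_inv m : wallis_ratio m ^+ 2 * (2 * m%:R + 1) <= 1.
Proof.
elim: m => [|m IH]; first by rewrite wallis_ratio0 mulr0 add0r !mulr1.
rewrite wallis_ratioS.
have -> : m.*2.+1%:R = 2 * m%:R + 1 :> R by rewrite -natrM mul2n -addn1 natrD.
have -> : m.*2.+2%:R = 2 * m%:R + 2 :> R by rewrite -natrM mul2n -addn2 natrD.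
rewrite -[m.+1]addn1 natrD.
have := wallis_ratio_gt0 m; have : (0 : R) <= m%:R by [].
set c := wallis_ratio m; set x := m%:R => x0 c0.
have -> : (c * (2 * x + 1) / (2 * x + 2)) ^+ 2 * (2 * (x + 1) + 1) =
    (c ^+ 2 * (2 * x + 1)) * ((2 * x + 1) * (2 * x + 3) / (2 * x + 2) ^+ 2).
  by field; lra.
apply: mulr_ile1 => //.
- by rewrite mulr_ge0 ?exprn_ge0 //; lra.
- by rewrite divr_ge0 ?exprn_ge0 ?mulr_ge0 //; lra.
- by rewrite ler_pdivrMr ?exprn_gt0 //; nra.
Qed.

Lemma wallis_ratio_mul_ge M L :
  2 / (pi * Num.sqrt ((2 * M%:R + 1) * (2 * L%:R + 1)))
    <= wallis_ratio M * wallis_ratio L.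
Proof.
have := ler_pM (ler0n R 2) (ler0n R 2)
  (wallis_ratio_sqr_ge M) (wallis_ratio_sqr_ge L).
have := wallis_ratio_gt0 M; have := wallis_ratio_gt0 L.
have : (0 : R) <= M%:R by []; have : (0 : R) <= L%:R by [].
move: (wallis_ratio M) (wallis_ratio L) (M%:R) (L%:R).
move=> cM cL m l l0 m0 cL0 cM0 H.
have p0 := pi_gt0 R.
have Q0 : 0 < (2 * m + 1) * (2 * l + 1) by rewrite mulr_gt0 //; lra.
have lhs0 : 2 / (pi * Num.sqrt ((2 * m + 1) * (2 * l + 1))) \in Num.nneg.
  by rewrite nnegrE divr_ge0 ?mulr_ge0 ?sqrtr_ge0 ?ltW.
have rhs0 : cM * cL \in Num.nneg by rewrite nnegrE mulr_ge0 ?ltW.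
rewrite -(ler_sqr lhs0 rhs0) expr_div_n !exprMn sqr_sqrtr ?(ltW Q0) //.
by rewrite ler_pdivrMr ?(mulr_gt0 (exprn_gt0 2 p0) Q0) //; lra.
Qed.

Lemma wallis_ratio_mul_le M L :
  wallis_ratio M * wallis_ratio L
    <= (Num.sqrt ((2 * M%:R + 1) * (2 * L%:R + 1)))^-1.
Proof.
have := ler_pM _ _ (wallis_ratio_sqr_le_inv M) (wallis_ratio_sqr_le_inv L).
have := wallis_ratio_gt0 M; have := wallis_ratio_gt0 L.
have : (0 : R) <= M%:R by []; have : (0 : R) <= L%:R by [].
move: (wallis_ratio M) (wallis_ratio L) (M%:R) (L%:R).
move=> cM cL m l l0 m0 cL0 cM0 H.
have Q0 : 0 < (2 * m + 1) * (2 * l + 1) by rewrite mulr_gt0 //; lra.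
have lhs0 : cM * cL \in Num.nneg by rewrite nnegrE mulr_ge0 ?ltW.
have rhs0 : (Num.sqrt ((2 * m + 1) * (2 * l + 1)))^-1 \in Num.nneg.
  by rewrite nnegrE invr_ge0 sqrtr_ge0.
rewrite -(ler_sqr lhs0 rhs0) exprVn sqr_sqrtr ?(ltW Q0) // -div1r ler_pdivlMr //.
have cM2 : 0 <= cM ^+ 2 * (2 * m + 1) by rewrite mulr_ge0 ?sqr_ge0 //; lra.
have cL2 : 0 <= cL ^+ 2 * (2 * l + 1) by rewrite mulr_ge0 ?sqr_ge0 //; lra.
by have := H cM2 cL2; rewrite mulr1; lra.
Qed.

End WallisIntegrals.

Lemma split_even_addn n k : (k <= n)%N -> ~~ odd (n + k) ->
  exists M L, [/\ (L <= M)%N, n = (M + L)%N & k = (M - L)%N].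
Proof.
move=> kn ev; have := even_halfK ev; set M := (n + k)./2 => EM.
by exists M, (n - M)%N; split; lia.
Qed.

Lemma normB1_le_normXB1 (R : realDomainType) (z : R) n :
  0 <= z -> (0 < n)%N -> `|z - 1| <= `|z ^+ n - 1|.
Proof.
move=> z0 n0; case: (lerP 1 z) => z1.
  by rewrite !ger0_norm ?subr_ge0 ?exprn_ege1 // lerD2r ler_eXnr.
rewrite !ler0_norm ?subr_le0 ?exprn_ile1 ?(ltW z1) // !opprB lerD2l lerN2.
by rewrite ler_iXnr // ltW.
Qed.

(* With [a = pi c_(l+j)^2], [b = pi c_l^2] and [n = 2 l + j], the expression
   under the norm is [(pi P~_n^j(0))^4 - 1]. *)
Lemma norm_quarticB1_le (R : realFieldType) (a b l j : R) :
  0 <= j -> 1 <= l ->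
  2 <= a * (2 * (l + j) + 1) -> 2 <= b * (2 * l + 1) ->
  a * (l + j) <= 1 -> b * l <= 1 ->
  `|(2 * (2 * l + j) + 1) ^+ 2 * (a * b) / 16 - 1| <= (j + 2) ^+ 2 / l.
Proof.
move=> j0 l1 aM bL aM1 bL1.
set n := 2 * l + j; set Y := (2 * n + 1) ^+ 2 * (a * b) / 16.
have a0 : 0 <= a by nra.
have b0 : 0 <= b by nra.
have l0 : 0 <= l by lra.
have ab_ge : 4 <= a * b * (n + 1) ^+ 2.
  have := ler_pM (ler0n R 2) (ler0n R 2) aM bL.
  have := mulr_ge0 (mulr_ge0 a0 b0) (sqr_ge0 j); rewrite /n; lra.
have ab_le : a * b * ((l + j) * l) <= 1.
  by have := ler_pM (mulr_ge0 a0 (addr_ge0 l0 j0)) (mulr_ge0 b0 l0) aM1 bL1; lra.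
rewrite ler_norml; apply/andP; split.
- have Y_ge : 4 * (2 * n + 1) ^+ 2 <= 16 * Y * (n + 1) ^+ 2.
    have -> : 16 * Y * (n + 1) ^+ 2 = (2 * n + 1) ^+ 2 * (a * b * (n + 1) ^+ 2).
      by rewrite /Y; field.
    by rewrite mulrC ler_wpM2l ?sqr_ge0.
  have n1 : 0 < n + 1 by rewrite /n; lra.
  have lo : (1 - Y) * (n + 1) <= 1 by nra.
  rewrite lerNl opprB ler_pdivlMr; last lra.
  have : 1 <= (j + 2) ^+ 2 by nra.
  have : 0 <= n + 1 - l by rewrite /n; lra.
  by case: (lerP Y 1) => Y1; nra.
- have Y_le : 16 * Y * ((l + j) * l) <= (2 * n + 1) ^+ 2.
    have -> : 16 * Y * ((l + j) * l) = (2 * n + 1) ^+ 2 * (a * b * ((l + j) * l)).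
      by rewrite /Y; field.
    by rewrite ler_piMr ?sqr_ge0.
  have up : 16 * (Y - 1) * ((l + j) * l) <= 4 * j ^+ 2 + 8 * l + 4 * j + 1.
    by move: Y_le; rewrite /n; lra.
  rewrite ler_pdivlMr; last lra.
  by case: (lerP Y 1) => Y1; nra.
Qed.

Section LegendreAtZero.
Variable R : realType.

Lemma coefX2B1X n N : (('X ^+ 2 - 1) ^+ n : {poly R})`_N =
  \sum_(i < n.+1) (-1) ^+ (n - i) *+ 'C(n, i) * (N == i.*2)%:R.
Proof.
have -> : ('X ^+ 2 - 1) ^+ n =
    \sum_(i < n.+1) ((-1) ^+ (n - i) *+ 'C(n, i))%:P * 'X^(i.*2) :> {poly R}.
  rewrite addrC exprDn; apply: eq_bigr => i _.
  by rewrite polyCMn rmorphXn rmorphN1 -mulrnAl -exprM mul2n.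
by rewrite coef_sum; apply: eq_bigr => i _; rewrite coefCM coefXn.
Qed.

Lemma coefX2B1X_odd n N : odd N -> (('X ^+ 2 - 1) ^+ n : {poly R})`_N = 0.
Proof.
move=> oN; rewrite coefX2B1X big1 // => i _.
case: eqP => [EN|_]; last by rewrite mulr0.
by move: oN; rewrite EN odd_double.
Qed.

Lemma coefX2B1X_double n M : (M <= n)%N ->
  (('X ^+ 2 - 1) ^+ n : {poly R})`_M.*2 = (-1) ^+ (n - M) *+ 'C(n, M).
Proof.
move=> Mn; rewrite coefX2B1X (bigD1 (Ordinal (n := n.+1) (m := M) Mn)) //=.
rewrite eqxx mulr1 big1 ?addr0 // => i /negPf iM.
case: eqP => [/double_inj EM|]; rewrite ?mulr0 //.
by move: iM; rewrite -val_eqE /= EM eqxx.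
Qed.

Lemma legendreP0 n k : legendreP n k (0 : R) =
  (-1) ^+ k / (2 ^+ n * n`!%:R) *
  ((('X ^+ 2 - 1) ^+ n : {poly R})`_(n + k) * (n + k)`!%:R).
Proof.
rewrite /legendreP horner_coef0 coef_derivn addn0 ffactnn.
by rewrite expr0n /= subr0 sqrtr1 expr1n mulr1 (mulr_natr _ (n + k)`!).
Qed.

Lemma legendrePn0_odd n k : odd (n + k) -> legendrePn n k (0 : R) = 0.
Proof.
by move=> o; rewrite /legendrePn legendreP0 coefX2B1X_odd // !(mul0r, mulr0).
Qed.

Lemma legendreP0_even M L : (L <= M)%N ->
  legendreP (M + L) (M - L) (0 : R) =
  (-1) ^+ M * (M.*2)`!%:R / (2 ^+ (M + L) * (M`! * L`!)%:R).
Proof.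
move=> LM; rewrite legendreP0.
have -> : (M + L + (M - L) = M.*2)%N by rewrite -addnn; lia.
rewrite coefX2B1X_double ?leq_addr // addKn -(bin_fact (leq_addr L M)) addKn.
have <- : (-1) ^+ (M - L) * (-1) ^+ L = (-1) ^+ M :> R by rewrite -exprD subnK.
have := fact_gt0 M; have := fact_gt0 L.
have : (0 < 'C(M + L, M))%N by rewrite bin_gt0 leq_addr.
rewrite -!(ltr0n R) => b0 l0 m0; have := exprn_gt0 (M + L) (ltr0Sn R 1) => p0.
by rewrite -mulr_natr !natrM; field; rewrite !gt_eqF.
Qed.

Lemma legendrePn0_even_sqr M L : (L <= M)%N ->
  legendrePn (M + L) (M - L) (0 : R) ^+ 2 =
  (2 * (M + L)%:R + 1) / (4 * pi) * (wallis_ratio R M * wallis_ratio R L).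
Proof.
move=> LM; have p0 := pi_gt0 R.
rewrite /legendrePn legendreP0_even //.
have -> : (M + L - (M - L) = L.*2)%N by rewrite -addnn; lia.
have -> : (M + L + (M - L) = M.*2)%N by rewrite -addnn; lia.
rewrite exprMn sqr_sqrtr; last by rewrite !mulr_ge0 ?invr_ge0 ?mulr_ge0 // ltW.
rewrite /wallis_ratio !exprMn exprVn !exprMn sqrr_sign mul1r !natrM.
have -> : (2 : R) ^+ (M + L) ^+ 2 = 2 ^+ M.*2 * 2 ^+ L.*2.
  by rewrite -exprM -exprD muln2 doubleD.
have := fact_gt0 M; have := fact_gt0 L; have := fact_gt0 M.*2.
have := fact_gt0 L.*2; rewrite -!(ltr0n R) => l2 m2 l0 m0.
have := exprn_gt0 M.*2 (ltr0Sn R 1); have := exprn_gt0 L.*2 (ltr0Sn R 1).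
move: p0; generalize (@pi R) => p p0 pL pM.
by field; rewrite !gt_eqF.
Qed.

Lemma legendrePn0_sqr_bounds n k : (k <= n)%N -> ~~ odd (n + k) ->
  (2 * n%:R + 1) / (2 * pi ^+ 2 * Num.sqrt (n.+1%:R ^+ 2 - k%:R ^+ 2))
    <= legendrePn n k (0 : R) ^+ 2 /\
  legendrePn n k (0 : R) ^+ 2
    <= (2 * n%:R + 1) / (4 * pi * Num.sqrt (n.+1%:R ^+ 2 - k%:R ^+ 2)).
Proof.
move=> kn ev; have [M [L [LM -> ->]]] := split_even_addn kn ev.
rewrite legendrePn0_even_sqr //.
have -> : (M + L).+1%:R ^+ 2 - (M - L)%:R ^+ 2 =
          (2 * M%:R + 1) * (2 * L%:R + 1) :> R.
  by rewrite natrB // -addn1 !natrD; ring.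
have c_ge := wallis_ratio_mul_ge R M L; have c_le := wallis_ratio_mul_le R M L.
have s0 : 0 < Num.sqrt ((2 * M%:R + 1) * (2 * L%:R + 1)) :> R.
  by rewrite sqrtr_gt0 mulr_gt0 // ltr_pwDr ?mulr_ge0.
have p0 := pi_gt0 R.
set s := Num.sqrt _ in s0 c_le c_ge *; set c := _ * _ in c_le c_ge *.
set p := pi in p0 c_ge *; clearbody s c p.
have K0 : 0 <= (2 * (M + L)%:R + 1) / (4 * p) by rewrite divr_ge0 ?mulr_ge0 ?ltW.
split.
- have -> : (2 * (M + L)%:R + 1) / (2 * p ^+ 2 * s) =
            (2 * (M + L)%:R + 1) / (4 * p) * (2 / (p * s)).
    by field; rewrite !gt_eqF.
  exact: (ler_wpM2l K0 c_ge).
- have -> : (2 * (M + L)%:R + 1) / (4 * p * s) =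
            (2 * (M + L)%:R + 1) / (4 * p) * s^-1.
    by field; rewrite !gt_eqF.
  exact: (ler_wpM2l K0 c_le).
Qed.

Lemma legendrePn0_dist_invpi l j : (0 < l)%N ->
  `| `|legendrePn (l.*2 + j) j (0 : R)| - pi^-1 | <= (j%:R + 2) ^+ 2 / l%:R.
Proof.
move=> l0; have p0 := pi_gt0 R.
have := legendrePn0_even_sqr (leq_addr j l).
rewrite addKn addnAC addnn; set x := legendrePn _ _ _ => x2.
have dist_le : `| `|x| - pi^-1 | <= `|(pi * `|x|) ^+ 4 - 1|.
  have pix0 : 0 <= pi * `|x| := mulr_ge0 (ltW p0) (normr_ge0 x).
  apply: le_trans (normB1_le_normXB1 (n := 4) pix0 isT).
  have -> : `|x| - pi^-1 = (pi * `|x| - 1) / pi.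
    by move: p0; generalize (@pi R) => p p0; field; rewrite gt_eqF.
  have ip0 : 0 <= pi^-1 :> R by rewrite invr_ge0 ltW.
  rewrite normrM (ger0_norm ip0) ler_pdivrMr //.
  by rewrite ler_peMr // (le_trans _ (pi_ge2 R)) ?ler1n.
have quartic : (pi * `|x|) ^+ 4 = (2 * (2 * l%:R + j%:R) + 1) ^+ 2 *
    ((pi * wallis_ratio R (l + j) ^+ 2) * (pi * wallis_ratio R l ^+ 2)) / 16.
  move: x2 p0; rewrite natrD -mul2n natrM.
  generalize (@pi R) (wallis_ratio R (l + j)) (wallis_ratio R l) => p cM cL x2 p0.
  rewrite -[4%N]/(2 * 2)%N exprM !exprMn real_normK ?num_real // x2.
  by field; rewrite gt_eqF.
apply: le_trans dist_le _; rewrite quartic; apply: norm_quarticB1_le.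
- exact: ler0n.
- by rewrite ler1n.
- by rewrite -natrD wallis_ratio_sqr_ge.
- exact: wallis_ratio_sqr_ge.
- by rewrite -natrD wallis_ratio_sqr_le.
- exact: wallis_ratio_sqr_le.
Qed.

Lemma legendrePn0_near_invpi j (eps : R) : 0 < eps ->
  exists N, forall l, (N <= l)%N ->
    `| `|legendrePn (l.*2 + j) j (0 : R)| - pi^-1 | < eps.
Proof.
move=> eps0; set B := (j%:R + 2) ^+ 2 / eps.
have [K BK] : exists K : nat, B < K%:R.
  by exists (Num.Def.archi_bound B); rewrite archi_boundP // divr_ge0 ?ltW.
exists K.+1 => l Kl; have l0 : (0 < l)%N by apply: leq_trans Kl.
apply: le_lt_trans (legendrePn0_dist_invpi j l0) _.
have lK : K%:R < l%:R :> R by rewrite ltr_nat.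
rewrite ltr_pdivrMr ?ltr0n // mulrC -ltr_pdivrMr //.
exact: lt_trans BK lK.
Qed.

End LegendreAtZero.

Lemma dvdz2_natD n (j : int) : (`|j| <= n)%N ->
  (2 %| n%:Z + j)%Z = ~~ odd (n + `|j|).
Proof.
case: j => [k|k] /= jn; first by rewrite -PoszD dvdzE /= dvdn2.
by rewrite NegzE subzn // dvdzE /= dvdn2 oddB // oddD.
Qed.

Lemma sqr_intr_abs (R : realDomainType) (j : int) :
  (j%:~R : R) ^+ 2 = (`|j|%N)%:R ^+ 2.
Proof. by rewrite natr_absz intr_norm real_normK ?realz. Qed.

Lemma sqr_norm_legendrePt (R : realType) n (j : int) (t : R) :
  `|legendrePt n j t| ^+ 2 = legendrePn n `|j| t ^+ 2.
Proof.
rewrite real_normK ?num_real // /legendrePt.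
by case: ifP => _ //; rewrite exprMn sqrr_sign mul1r.
Qed.

Theorem lemma1 (R : realType) :
  (forall (n : nat) (j : int), (`|j| <= n)%N ->
     (~~ (2 %| n%:Z + j)%Z -> legendrePt n j (0 : R) = 0) /\
     ((2 %| n%:Z + j)%Z ->
        (2 * n%:R + 1) / (2 * pi ^+ 2 * Num.sqrt (n.+1%:R ^+ 2 - j%:~R ^+ 2))
          <= `|legendrePt n j (0 : R)| ^+ 2 /\
        `|legendrePt n j (0 : R)| ^+ 2
          <= (2 * n%:R + 1) / (4 * pi * Num.sqrt (n.+1%:R ^+ 2 - j%:~R ^+ 2))))
  /\
  (forall j : nat, forall eps : R, 0 < eps ->
     exists N : nat, forall n : nat, (N <= n)%N -> ~~ odd (n + j) ->
       `| `|legendrePt n j%:Z (0 : R)| - pi^-1 | < eps).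
Proof.
split=> [n j jn | j eps eps0].
  rewrite dvdz2_natD // sqr_norm_legendrePt sqr_intr_abs negbK.
  split=> [odd_nj | ev]; last exact: legendrePn0_sqr_bounds.
  by rewrite /legendrePt legendrePn0_odd // mulr0; case: ifP.
have [N near] := legendrePn0_near_invpi j eps0.
exists (N.*2 + j)%N => n Nn ev.
have [M [L [LM En Ej]]] := split_even_addn (leq_trans (leq_addl _ _) Nn) ev.
have -> : n = (L.*2 + j)%N by lia.
by apply: near; lia.
Qed.
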